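(* Let $n,m\ge1$ and let $v=(v_1,\dots,v_m)$ with $v_j\in\mathbb R^n$ be indeterminates (so $mn$ real coordinates). Let $(a_{ij})$ be a real $n\times m$ matrix of rank $n$, and $t_i=\sum_ja_{ij}v_j$ ($i=1,\dots,n$). Let $b_1,\dots,b_n$ be real linear combinations of the scalar products $(v_h,v_k)$. Let $d(v)$ be the determinant of the $n\times n$ matrix with rows $t_1,\dots,t_n$, and let $x=(f_1/d,\dots,f_n/d)$ (with $f_i$ polynomials in $v$) be the solution, given by Cramer's rule, of the linear system $(x,t_i)=b_i$, $i=1,\dots,n$. Assume there exist $a=\sum_jc_jv_j$ with $c_j\in\mathbb R$ and $b$ a real linear combination of the $(v_h,v_k)$ such that $$|x|^2+(x,a)+b=0$$ identically in $v$. Then $x$ is a polynomial in the coordinates of $v$, i.e. $d$ divides each $f_i$.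
   Context: $(\cdot,\cdot)$ denotes the standard scalar product on $\mathbb R^n$ and $|x|^2=(x,x)$. *)

From HB Require Import structures.
From mathcomp Require Import all_boot all_order all_algebra.
Set Implicit Arguments. Unset Strict Implicit. Unset Printing Implicit Defensive.
Import Order.TTheory GRing.Theory Num.Theory.
Local Open Scope ring_scope.

(* The indeterminates v_1..v_m in R^n are the rows of V : 'M_(m,n). *)

Inductive polyfun (R : ringType) (m n : nat) : ('M[R]_(m, n) -> R) -> Prop :=
| pf_const (c : R) : polyfun (fun _ => c)
| pf_coord (j : 'I_m) (k : 'I_n) : polyfun (fun V => V j k)
| pf_add f g : polyfun f -> polyfun g -> polyfun (fun V => f V + g V)
| pf_mul f g : polyfun f -> polyfun g -> polyfun (fun V => f V * g V).

Definition dotr (R : ringType) (n : nat) (x y : 'rV[R]_n) : R := (x *m y^T) 0 0.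

Definition gram (R : ringType) (m n : nat) (V : 'M[R]_(m, n)) : 'M[R]_m := V *m V^T.

Definition qlin (R : ringType) (m n : nat) (beta : 'M[R]_m) (V : 'M[R]_(m, n)) : R :=
  \sum_(h < m) \sum_(k < m) beta h k * gram V h k.

Definition tmat (R : ringType) (n m : nat) (A : 'M[R]_(n, m)) (V : 'M[R]_(m, n)) : 'M[R]_n :=
  A *m V.

(* Cramer numerator f_i for the system (x, t_r) = b_r, b_r = qlin (Bs r) V *)
Definition cramer_num (R : comRingType) (n m : nat) (A : 'M[R]_(n, m))
  (Bs : 'I_n -> 'M[R]_m) (V : 'M[R]_(m, n)) (i : 'I_n) : R :=
  \det (\matrix_(r < n, s < n) (if s == i then qlin (Bs r) V else tmat A V r s)).

Definition solx (R : fieldType) (n m : nat) (A : 'M[R]_(n, m))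
  (Bs : 'I_n -> 'M[R]_m) (V : 'M[R]_(m, n)) : 'rV[R]_n :=
  \row_(i < n) (cramer_num A Bs V i / \det (tmat A V)).

From HB Require Import structures.
From mathcomp Require Import all_boot all_order all_algebra.
From mathcomp Require Import ring.
From Stdlib Require Import FunctionalExtensionality.
Set Implicit Arguments. Unset Strict Implicit. Unset Printing Implicit Defensive.
Import Order.TTheory GRing.Theory Num.Theory.
Local Open Scope ring_scope.

(* Let A' be a right inverse of A and a_r the rows of A.  On the line
   W(s) = V + s A' we have T(W) = T(V) + s, so d(W) is the characteristic
   polynomial of -T(V); clearing denominators in the quadric relation gives the
   polynomial identity |f|^2 + d (f, c W) + d^2 b(W) = 0 in s.  If s^k exactly
   divides d, evaluating at s = 0 (a vanishing sum of squares) shows that s^k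
   divides f, and then T(W) f = d b(W) forces l.b(V) = 0 whenever l T(V) = 0.
   Hence b_r vanishes on the hyperplane a_r V = 0, so b_r(V) = (a_r V, rho_r V)
   for an explicit row rho_r; testing the pencils a_r + l a_s shows that rho_r
   does not depend on r.  Then b(V) = T(V) (rho V)^T and Cramer's rule gives
   x = rho V. *)

Section PolyFun.
Variables (R : nzRingType) (m n : nat).

Lemma polyfun_ext (f g : 'M[R]_(m, n) -> R) : polyfun f -> f =1 g -> polyfun g.
Proof. by move=> pf /functional_extensionality <-. Qed.

Lemma polyfun_sum I (r : seq I) (P : pred I) (F : I -> 'M[R]_(m, n) -> R) :
  (forall i, polyfun (F i)) -> polyfun (fun V => \sum_(i <- r | P i) F i V).
Proof.
move=> pfF; elim: r => [|i r IHr].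
  by apply: (polyfun_ext (pf_const m n (0 : R))) => V; rewrite big_nil.
have [Pi|nPi] := boolP (P i).
  by apply: (polyfun_ext (pf_add (pfF i) IHr)) => V; rewrite big_cons Pi.
by apply: (polyfun_ext IHr) => V; rewrite big_cons (negPf nPi).
Qed.

Lemma polyfun_mulmx (c : 'rV[R]_m) (k : 'I_n) :
  polyfun (fun V : 'M[R]_(m, n) => (c *m V) 0 k).
Proof.
have pf_term j : polyfun (fun V : 'M[R]_(m, n) => c 0 j * V j k).
  by apply: pf_mul; [exact: pf_const | exact: pf_coord].
by apply: (polyfun_ext (polyfun_sum (index_enum _) xpredT pf_term)) => V; rewrite mxE.
Qed.

End PolyFun.

Lemma poly_eq0_of_horner0 (R : numDomainType) (p : {poly R}) :
  (forall x, p.[x] = 0) -> p = 0.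
Proof.
move=> p0; apply: (@roots_geq_poly_eq0 _ p [seq i%:R | i <- iota 0 (size p)]).
- by apply/allP => _ /mapP[i _ ->]; apply/rootP.
- by rewrite map_inj_uniq ?iota_uniq // => i j /eqP; rewrite eqr_nat => /eqP.
- by rewrite size_map size_iota.
Qed.

Lemma poly_eq0_off_roots (R : numDomainType) (p q : {poly R}) : q != 0 ->
  (forall x, q.[x] != 0 -> p.[x] = 0) -> p = 0.
Proof.
move=> q_neq0 pq0; suff /eqP : p * q = 0 by rewrite mulf_eq0 (negPf q_neq0) orbF => /eqP.
apply: poly_eq0_of_horner0 => x; rewrite hornerM.
by have [->|/pq0->] := eqVneq q.[x] 0; rewrite ?mulr0 ?mul0r.
Qed.

Section DotProduct.
Variables (R : comNzRingType) (n : nat).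
Implicit Types (x y : 'rV[R]_n) (a : R).

Lemma dotrE x y : dotr x y = \sum_i x 0 i * y 0 i.
Proof. by rewrite /dotr mxE; apply: eq_bigr => i _; rewrite mxE. Qed.

Lemma dotrC x y : dotr x y = dotr y x.
Proof. by rewrite !dotrE; apply: eq_bigr => i _; rewrite mulrC. Qed.

Lemma dotrZl a x y : dotr (a *: x) y = a * dotr x y.
Proof. by rewrite /dotr -scalemxAl mxE. Qed.

Lemma dotrZr a x y : dotr x (a *: y) = a * dotr x y.
Proof. by rewrite dotrC dotrZl dotrC. Qed.

Lemma map_dotr (S : comNzRingType) (f : {rmorphism R -> S}) x y :
  f (dotr x y) = dotr (map_mx f x) (map_mx f y).
Proof. by rewrite /dotr map_trmx -map_mxM [RHS]mxE. Qed.

Lemma trmx11 (M : 'M[R]_1) : M^T 0 0 = M 0 0.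
Proof. exact: mxE. Qed.

Lemma mulmx11 (P Q : 'M[R]_1) : (P *m Q) 0 0 = P 0 0 * Q 0 0.
Proof. by rewrite mxE big_ord1. Qed.

Lemma dotr_rank1 (k : 'I_n) (P Q : 'M[R]_1) :
  dotr (P *m delta_mx 0 k) (Q *m delta_mx 0 k) = P 0 0 * Q 0 0.
Proof.
rewrite /dotr trmx_mul trmx_delta mulmxA -(mulmxA P) mul_delta_mx.
have -> : delta_mx 0 0 = 1%:M :> 'M[R]_1 by apply/matrixP => i j; rewrite !ord1 !mxE.
by rewrite mulmx1 mulmx11 trmx11.
Qed.

End DotProduct.

Lemma dotr_self_eq0 (R : realDomainType) n (x : 'rV[R]_n) : dotr x x = 0 -> x = 0.
Proof.
rewrite dotrE => /psumr_eq0P x0; apply/matrixP => i j; rewrite ord1 mxE.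
by apply/eqP; rewrite -sqrf_eq0 expr2 x0 // => k _; rewrite -expr2 sqr_ge0.
Qed.

Lemma mulX_of_horner0 (R : fieldType) n (F : 'rV[{poly R}]_n) :
  map_mx (horner_eval 0) F = 0 -> exists G, F = 'X *: G.
Proof.
move=> /matrixP F0; exists (map_mx (fun p => p %/ 'X) F); apply/matrixP => i j.
rewrite !mxE divpKC // -[X in X %| _]subr0 -polyC0 dvdp_XsubCl.
by apply/rootP; have := F0 i j; rewrite !mxE horner_evalE.
Qed.

Lemma sqr_identity_dvdXn (R : realFieldType) n (C F : 'rV[{poly R}]_n)
    (E Q : {poly R}) k :
  dotr F F + 'X^k * E * dotr F C + ('X^k * E) ^+ 2 * Q = 0 ->
  exists G, F = 'X^k *: G.
Proof.
elim: k F => [|k IHk] F HF; first by exists F; rewrite expr0 scale1r.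
have [G DF] : exists G, F = 'X *: G.
  apply/mulX_of_horner0/dotr_self_eq0; rewrite -map_dotr.
  move/(congr1 (horner_eval 0)): HF.
  by rewrite !rmorphD !rmorphM rmorphXn /= !horner_evalE hornerX expr0n !mul0r !addr0 horner0.
have [G' DG] : exists G', G = 'X^k *: G'.
  apply: IHk; apply/eqP.
  suff : 'X ^+ 2 * (dotr G G + 'X^k * E * dotr G C + ('X^k * E) ^+ 2 * Q) == 0.
    by rewrite mulf_eq0 expf_eq0 polyX_eq0 andbF.
  rewrite -{}HF DF dotrZl !dotrZr dotrZl !exprS; apply/eqP; ring.
by exists G'; rewrite DF DG scalerA -exprS.
Qed.

Section Cramer.
Variables (R : comNzRingType) (n m : nat) (A : 'M[R]_(n, m)) (Bs : 'I_n -> 'M[R]_m).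
Implicit Types V : 'M[R]_(m, n).

Definition cramer_row (V : 'M[R]_(m, n)) : 'rV[R]_n := \row_i cramer_num A Bs V i.

Definition qlin_col (V : 'M[R]_(m, n)) : 'cV[R]_n := \col_r qlin (Bs r) V.

Lemma cramer_row_adj V : (cramer_row V)^T = \adj (tmat A V) *m qlin_col V.
Proof.
apply/matrixP => i j; rewrite ord1 !mxE /cramer_num (expand_det_col _ i).
apply: eq_bigr => r _; rewrite !mxE eqxx mulrC /cofactor; congr (_ * \det _ * _).
by apply/matrixP => a b; rewrite !mxE eq_sym (negPf (neq_lift _ _)).
Qed.

Lemma tmat_mul_cramer_row V :
  tmat A V *m (cramer_row V)^T = \det (tmat A V) *: qlin_col V.
Proof. by rewrite cramer_row_adj mulmxA mul_mx_adj mul_scalar_mx. Qed.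

Lemma cramer_num_solution V (z : 'cV[R]_n) i :
  qlin_col V = tmat A V *m z -> cramer_num A Bs V i = \det (tmat A V) * z i 0.
Proof.
move=> bE; have := congr1 (fun M : 'cV_n => M i 0) (cramer_row_adj V).
by rewrite bE mulmxA mul_adj_mx mul_scalar_mx !mxE.
Qed.

End Cramer.

Lemma solxE (R : fieldType) n m (A : 'M[R]_(n, m)) Bs V :
  solx A Bs V = (\det (tmat A V))^-1 *: cramer_row A Bs V.
Proof. by apply/matrixP => i j; rewrite !mxE mulrC. Qed.

Section RingMorphism.
Variables (R S : comNzRingType) (f : {rmorphism R -> S}) (n m : nat).

Lemma map_qlin (b : 'M[R]_m) (V : 'M[R]_(m, n)) :
  f (qlin b V) = qlin (map_mx f b) (map_mx f V).
Proof.
rewrite /qlin /gram rmorph_sum; apply: eq_bigr => h _; rewrite rmorph_sum.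
by apply: eq_bigr => k _; rewrite rmorphM map_trmx -map_mxM !mxE.
Qed.

Lemma map_cramer_row (A : 'M[R]_(n, m)) Bs V :
  map_mx f (cramer_row A Bs V)
  = cramer_row (map_mx f A) (fun r => map_mx f (Bs r)) (map_mx f V).
Proof.
apply/matrixP => o i; rewrite !mxE /cramer_num -det_map_mx; congr (\det _).
apply/matrixP => r s; rewrite !mxE; case: (s == i); first exact: map_qlin.
by rewrite rmorph_sum; apply: eq_bigr => j _; rewrite rmorphM !mxE.
Qed.

Lemma map_qlin_col Bs (V : 'M[R]_(m, n)) :
  map_mx f (qlin_col Bs V) = qlin_col (fun r => map_mx f (Bs r)) (map_mx f V).
Proof. by apply/matrixP => r j; rewrite !mxE map_qlin. Qed.

End RingMorphism.

Section GenericLine.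
Variables (R : comNzRingType) (m n : nat).

Definition line_mx (V Z : 'M[R]_(m, n)) : 'M[{poly R}]_(m, n) :=
  map_mx polyC V + 'X *: map_mx polyC Z.

Lemma map_horner_polyC p q x (M : 'M[R]_(p, q)) :
  map_mx (horner_eval x) (map_mx polyC M) = M.
Proof. by apply/matrixP => i j; rewrite !mxE horner_evalE hornerC. Qed.

Lemma map_horner_line_mx x (V Z : 'M[R]_(m, n)) :
  map_mx (horner_eval x) (line_mx V Z) = V + x *: Z.
Proof.
by apply/matrixP => i j; rewrite !mxE horner_evalE hornerD mulrC hornerMX !hornerC mulrC.
Qed.

End GenericLine.

Section LeftKernel.
Variables (R : realFieldType) (n m : nat) (A : 'M[R]_(n, m)) (A' : 'M[R]_(m, n)).
Variables (Bs : 'I_n -> 'M[R]_m) (c : 'rV[R]_m) (beta : 'M[R]_m).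
Hypothesis AA' : A *m A' = 1%:M.
Hypothesis quadric : forall V : 'M[R]_(m, n), \det (tmat A V) != 0 ->
  dotr (solx A Bs V) (solx A Bs V) + dotr (solx A Bs V) (c *m V) + qlin beta V = 0.

Local Notation AP := (map_mx polyC A).
Local Notation BsP := (fun r => map_mx polyC (Bs r)).

Lemma map_horner_BsP x : (fun r => map_mx (horner_eval x) (BsP r)) = Bs.
Proof. by apply: functional_extensionality => r; rewrite map_horner_polyC. Qed.

Lemma cramer_quadric V (d := \det (tmat A V)) (f := cramer_row A Bs V) : d != 0 ->
  dotr f f + d * dotr f (c *m V) + d ^+ 2 * qlin beta V = 0.
Proof.
move=> d_neq0; rewrite -(mulr0 (d ^+ 2)) -(quadric d_neq0) solxE !dotrZl dotrZr.
by rewrite -/d -/f; field.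
Qed.

Lemma tmat_line_mx V : tmat AP (line_mx V A') = char_poly_mx (- tmat A V).
Proof.
rewrite /tmat /line_mx /char_poly_mx mulmxDr -scalemxAr -!map_mxM AA' map_mx1.
by rewrite scalemx1 map_mxN opprK addrC.
Qed.

Lemma det_tmat_line_mx_neq0 V : \det (tmat AP (line_mx V A')) != 0.
Proof. by rewrite tmat_line_mx monic_neq0 // char_poly_monic. Qed.

Lemma line_cramer_quadric V (L := line_mx V A') (F := cramer_row AP BsP L)
    (D := \det (tmat AP L)) :
  dotr F F + D * dotr F (map_mx polyC c *m L) + D ^+ 2 * qlin (map_mx polyC beta) L = 0.
Proof.
apply: (poly_eq0_off_roots (det_tmat_line_mx_neq0 V)) => x.
rewrite /F /D /L -!horner_evalE !rmorphD !rmorphM !map_dotr -!det_map_mx map_qlin.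
rewrite /tmat !map_mxM map_cramer_row !map_horner_polyC map_horner_BsP map_horner_line_mx.
exact: cramer_quadric.
Qed.

Lemma map_horner_qlin_col_line x V (l : 'rV[R]_n) :
  map_mx (horner_eval x) (map_mx polyC l *m qlin_col BsP (line_mx V A'))
  = l *m qlin_col Bs (V + x *: A').
Proof.
by rewrite map_mxM map_horner_polyC map_qlin_col map_horner_BsP map_horner_line_mx.
Qed.

Lemma qlin_col_left_kernel V (l : 'rV[R]_n) :
  l *m tmat A V = 0 -> l *m qlin_col Bs V = 0.
Proof.
move=> lT0; set L := line_mx V A'; set F := cramer_row AP BsP L.
set D := \det (tmat AP L).
have /= := line_cramer_quadric V; rewrite -/L -/F -/D.
set lP := map_mx polyC l; set bP := qlin_col BsP L.
have lTL : lP *m tmat AP L = 'X *: lP.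
  rewrite tmat_line_mx /char_poly_mx mulmxBr mul_mx_scalar map_mxN mulmxN opprK.
  by rewrite /lP -map_mxM lT0 map_mx0 addr0.
have cramerL : 'X *: (lP *m F^T) = D *: (lP *m bP).
  by rewrite scalemxAl -lTL -mulmxA tmat_mul_cramer_row scalemxAr.
(* D = s^k E with E(0) != 0, so s^k divides F; cancelling s^k in cramerL leaves
   s (l.G) = E (l.b) in s, whose value at s = 0 is the claim. *)
have [k /sig2_eqW[E /implyP/(_ (det_tmat_line_mx_neq0 V)) E0 DE]] :=
  multiplicity_XsubC D 0.
rewrite DE polyC0 subr0 [E * _]mulrC in cramerL * => /sqr_identity_dvdXn[G FG].
move: cramerL; rewrite FG linearZ /= -scalemxAr !scalerA mulrC -!scalerA.
move=> /matrixP/(_ 0 0); rewrite [LHS]mxE [RHS]mxE.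
move=> /(mulfI (expf_neq0 _ (negbT (polyX_eq0 _)))).
rewrite [X in X = _]mxE [X in _ = X]mxE => /(congr1 (horner_eval 0)).
rewrite !rmorphM /= !horner_evalE hornerX mul0r => /esym/eqP.
have -> : ((lP *m bP) 0 0).[0] = (l *m qlin_col Bs V) 0 0.
  rewrite -[V in RHS]addr0 -(scale0r A') -map_horner_qlin_col_line.
  by rewrite [RHS]mxE horner_evalE.
rewrite mulf_eq0 -rootE (negPf E0) => /eqP lb0.
by apply/matrixP => i j; rewrite !ord1 lb0 mxE.
Qed.
End LeftKernel.

Section QuadraticForm.
Variables (R : comNzRingType) (m n : nat).
Implicit Types (b : 'M[R]_m) (X Y Z V : 'M[R]_(m, n)).

Definition polar b X Y : R := \tr (X^T *m b *m Y).

Lemma qlin_polar b V : qlin b V = polar b V V.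
Proof.
rewrite /polar -mulmxA mxtrace_mulC -mulmxA /mxtrace /qlin.
apply: eq_bigr => h _; rewrite mxE; apply: eq_bigr => k _; congr (_ * _).
by rewrite /gram !mxE; apply: eq_bigr => j _; rewrite !mxE mulrC.
Qed.

Lemma polarDl b X Y Z : polar b (X + Y) Z = polar b X Z + polar b Y Z.
Proof. by rewrite /polar linearD /= !mulmxDl mxtraceD. Qed.

Lemma polarDr b X Y Z : polar b Z (X + Y) = polar b Z X + polar b Z Y.
Proof. by rewrite /polar mulmxDr mxtraceD. Qed.

Lemma polarC b X Y : polar b X Y = polar b^T Y X.
Proof. by rewrite /polar -mxtrace_tr !trmx_mul trmxK mulmxA. Qed.

Lemma polar_rank1 b X (u : 'cV[R]_m) (t : 'rV[R]_n) :
  polar b X (u *m t) = (t *m X^T *m b *m u) 0 0.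
Proof. by rewrite /polar !mulmxA mxtrace_mulC trace_mx11 !mulmxA. Qed.

(* With t = a V and X = V - u t, so that a X = 0, expanding q(X + u t) gives
   q(V) = (t, rho V) for the following rho. *)
Definition qlin_cofactor b (a : 'rV[R]_m) (u : 'cV[R]_m) : 'rV[R]_m :=
  u^T *m (b + b^T) - (u^T *m b *m u) 0 0 *: a.

Lemma qlin_kernel_factor b (a : 'rV[R]_m) (u : 'cV[R]_m) :
  a *m u = 1%:M -> (forall X, a *m X = 0 -> qlin b X = 0) ->
  forall V, qlin b V = dotr (a *m V) (qlin_cofactor b a u *m V).
Proof.
move=> au qker V; set t := a *m V; set X := V - u *m t.
have aX : a *m X = 0 by rewrite mulmxBr mulmxA au mul1mx subrr.
have XT : X^T = V^T - t^T *m u^T by rewrite linearB /= trmx_mul.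
have tT : V^T *m a^T = t^T by rewrite trmx_mul.
have DV : V = X + u *m t by rewrite subrK.
clearbody X t.
have -> : qlin b V = polar b X (u *m t) + polar b (u *m t) X + polar b (u *m t) (u *m t).
  rewrite {1}DV qlin_polar polarDl !polarDr.
  by rewrite -(qlin_polar b X) qker // add0r addrA.
rewrite (polarC b (u *m t) X) !polar_rank1 XT {X aX XT DV}.
set k := (u^T *m b *m u) 0 0.
have kT : (u^T *m b^T *m u) 0 0 = k by rewrite /k -[RHS]trmx11 !trmx_mul trmxK mulmxA.
have ttT M : (t *m (t^T *m u^T) *m M *m u) 0 0 = (t *m t^T) 0 0 * (u^T *m M *m u) 0 0.
  by rewrite -mulmx11 !mulmxA.
have expand M : (t *m (V^T - t^T *m u^T) *m M *m u) 0 0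
    = (t *m V^T *m M *m u) 0 0 - (t *m t^T) 0 0 * (u^T *m M *m u) 0 0.
  by rewrite mulmxBr !mulmxBl [LHS]mxE [X in _ + X]mxE ttT.
rewrite !expand trmx_mul ttT kT /dotr /qlin_cofactor !trmx_mul.
rewrite -/k raddfB /= linearZ /= trmx_mul trmxK raddfD /= [(b + b^T)^T]raddfD /= trmxK.
rewrite mulmxN -scalemxAr tT mulmxDl !mulmxDr mulmxN -scalemxAr !mulmxA.
by rewrite -[RHS]trace_mx11 !raddfD /= raddfN /= linearZ /= !trace_mx11; ring.
Qed.

End QuadraticForm.

(* Test with y = us - l ur + w, w in the common kernel of ar and as_: l = 1, 2
   give d ur = d us = 0, and then d w = 0. *)
Lemma pencil_functional_eq0 (R : numFieldType) m (ar as_ d : 'rV[R]_m)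
    (ur us : 'cV[R]_m) :
  ar *m ur = 1%:M -> as_ *m us = 1%:M -> ar *m us = 0 -> as_ *m ur = 0 ->
  (forall (l : R) (y : 'cV_m), l != 0 ->
     (ar + l *: as_) *m y = 0 -> as_ *m y = 1%:M -> d *m y = 0) ->
  d = 0.
Proof.
move=> arur asus arus asur dH.
pose proj (z : 'cV_m) := z - (as_ *m z) 0 0 *: us - (ar *m z) 0 0 *: ur.
have projK z : ar *m proj z = 0 /\ as_ *m proj z = 0.
  rewrite /proj; split; rewrite !mulmxBr -!scalemxAr ?arur ?asus ?arus ?asur;
  by rewrite scaler0 subr0 scalemx1 -mx11_scalar subrr.
have dK l (w : 'cV_m) : l != 0 -> ar *m w = 0 -> as_ *m w = 0 ->
    (d *m us) 0 0 - l * (d *m ur) 0 0 + (d *m w) 0 0 = 0.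
  move=> l0 arw asw; have /(congr1 mxtrace) : d *m (us - l *: ur + w) = 0.
    apply: dH l0 _ _.
      rewrite mulmxDl -scalemxAl !mulmxDr !mulmxN -!scalemxAr.
      by rewrite arw asw arus arur asus asur scaler0 oppr0 !addr0 add0r addNr.
    by rewrite !mulmxDr mulmxN -scalemxAr asw asus asur scaler0 oppr0 !addr0.
  by rewrite !mulmxDr mulmxN -scalemxAr !mxtraceD raddfN /= mxtraceZ mxtrace0 !trace_mx11.
have dK0 l : l != 0 -> (d *m us) 0 0 - l * (d *m ur) 0 0 = 0.
  move=> l0; have := dK l 0 l0 (mulmx0 _ _) (mulmx0 _ _).
  by rewrite mulmx0 [X in _ + X]mxE addr0.
have dur : (d *m ur) 0 0 = 0.
  have two_neq0 : (2%:R : R) != 0 by rewrite pnatr_eq0.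
  set x := (d *m us) 0 0; set y := (d *m ur) 0 0.
  have -> : y = (x - 1 * y) - (x - 2%:R * y) by ring.
  by rewrite dK0 ?oner_neq0 // dK0 // subrr.
have dus : (d *m us) 0 0 = 0 by have := dK0 _ (oner_neq0 _); rewrite dur mulr0 subr0.
have dz (z : 'cV_m) : (d *m z) 0 0 = 0.
  have [arp asp] := projK z; have := dK 1 (proj z) (oner_neq0 _) arp asp.
  rewrite dus dur mulr0 subr0 add0r => <-; rewrite /proj !mulmxBr -!scalemxAr.
  by rewrite -[RHS]trace_mx11 !raddfB /= !mxtraceZ !trace_mx11 dus dur !mulr0 !subr0.
by apply/rowP => j; rewrite mxE -(dz (delta_mx j 0)) -colE mxE.
Qed.

Section Pencil.
Variables (R : realFieldType) (n m : nat) (A : 'M[R]_(n, m)) (A' : 'M[R]_(m, n)).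
Variable Bs : 'I_n -> 'M[R]_m.
Hypothesis AA' : A *m A' = 1%:M.
Hypothesis rhs_left_kernel : forall (V : 'M[R]_(m, n)) (l : 'rV[R]_n),
  l *m tmat A V = 0 -> l *m qlin_col Bs V = 0.

Lemma row_mul_col r s : row r A *m col s A' = (r == s)%:R%:M.
Proof.
apply/matrixP => i j; rewrite !ord1 [RHS]mxE eqxx mulr1n.
have <- : (A *m A') r s = (r == s)%:R by rewrite AA' mxE.
by rewrite !mxE; apply: eq_bigr => k _; rewrite !mxE.
Qed.

Local Notation rho r := (qlin_cofactor (Bs r) (row r A) (col r A')).

Lemma qlin_row_factor r (V : 'M[R]_(m, n)) :
  qlin (Bs r) V = dotr (row r A *m V) (rho r *m V).
Proof.
apply: qlin_kernel_factor => [|X rX0]; first by rewrite row_mul_col eqxx.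
have := @rhs_left_kernel X (delta_mx 0 r); rewrite /tmat mulmxA -!rowE rX0.
by move=> /(_ erefl)/(congr1 (fun M : 'M_1 => M 0 0)); rewrite !mxE.
Qed.

Lemma qlin_pencil r s l (V : 'M[R]_(m, n)) :
  row r A *m V + l *: (row s A *m V) = 0 -> qlin (Bs r) V + l * qlin (Bs s) V = 0.
Proof.
have := @rhs_left_kernel V (delta_mx 0 r + l *: delta_mx 0 s).
rewrite /tmat mulmxA !mulmxDl -!scalemxAl -!rowE => H /H.
by move=> /(congr1 (fun M : 'M_1 => M 0 0)); rewrite !mxE.
Qed.

Lemma rho_const (k : 'I_n) r s : rho r = rho s.
Proof.
have [<-//|rs] := eqVneq r s; apply/eqP; rewrite -subr_eq0; apply/eqP.
have rAcA' x y : x != y -> row x A *m col y A' = 0.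
  by move=> xy; rewrite row_mul_col (negPf xy) raddf0.
apply: (pencil_functional_eq0 (ar := row r A) (as_ := row s A)
  (ur := col r A') (us := col s A')) => [||||l y l0 ly asy].
- by rewrite row_mul_col eqxx.
- by rewrite row_mul_col eqxx.
- exact: rAcA'.
- by rewrite rAcA' // eq_sym.
pose V := y *m delta_mx 0 k.
have rsV : row r A *m V + l *: (row s A *m V) = 0.
  by rewrite scalemxAl -mulmxDl /V mulmxA ly mul0mx.
have sy : (row s A *m y) 0 0 = 1 by rewrite asy mxE eqxx mulr1n.
have ry : (row r A *m y) 0 0 = - l.
  move/eqP: ly; rewrite mulmxDl -scalemxAl asy addr_eq0 => /eqP->.
  by rewrite !mxE eqxx mulr1n mulr1.
have := qlin_pencil rsV.
rewrite !qlin_row_factor /V !mulmxA !dotr_rank1 ry sy mul1r mulNr addrC -mulrBr.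
move=> /eqP; rewrite mulf_eq0 (negPf l0) subr_eq0 => /eqP syr.
by rewrite mulmxBl (mx11_scalar (rho r *m y)) (mx11_scalar (rho s *m y)) syr subrr.
Qed.

Lemma qlin_col_factor (k : 'I_n) (V : 'M[R]_(m, n)) :
  qlin_col Bs V = tmat A V *m (rho k *m V)^T.
Proof.
apply/matrixP => r j; rewrite ord1 mxE qlin_row_factor (rho_const k r k) /dotr.
by rewrite /tmat -row_mul mxE [RHS]mxE; apply: eq_bigr => i _; rewrite !mxE.
Qed.

End Pencil.

Theorem mainTheorem10 (R : realFieldType) (n m : nat)
  (A : 'M[R]_(n, m)) (Bs : 'I_n -> 'M[R]_m) :
  (0 < n)%N -> (0 < m)%N -> \rank A = n ->
  (exists (c : 'rV[R]_m) (beta : 'M[R]_m),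
     forall V : 'M[R]_(m, n), \det (tmat A V) != 0 ->
       dotr (solx A Bs V) (solx A Bs V) + dotr (solx A Bs V) (c *m V)
         + qlin beta V = 0) ->
  forall i : 'I_n, exists g : 'M[R]_(m, n) -> R,
    polyfun g /\ forall V : 'M[R]_(m, n), cramer_num A Bs V i = \det (tmat A V) * g V.
Proof.
move=> _ _ rankA [c [beta quadric]] i.
have /row_freeP[A' AA'] : row_free A by rewrite /row_free rankA.
have rhs_ker := qlin_col_left_kernel AA' quadric.
exists (fun V => (qlin_cofactor (Bs i) (row i A) (col i A') *m V) 0 i).
split=> [|V]; first exact: polyfun_mulmx.
by rewrite (cramer_num_solution _ (qlin_col_factor AA' rhs_ker i V)) mxE.
Qed.
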